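(* Let $\nu$ be an infinite cardinal, let $\mu=\operatorname{cf}(\nu)$, and let $\lambda$ be a cardinal. If $\mu\not\to_{hc}(\mu)^2_\lambda$, then $\nu\not\to_{hc}(\nu)^2_\lambda$.
   Context: $[S]^2$ denotes the set of $2$-element subsets of $S$. A graph $G=(V,E)$ is highly connected if for every $D\subseteq V$ with $|D|<|V|$ the graph induced on $V\setminus D$ is connected. For cardinals $\nu,\mu,\lambda$, $\nu\to_{hc}(\mu)^2_\lambda$ means: for every $c:[\nu]^2\to\lambda$ there exist $\xi<\lambda$ and $X\subseteq\nu$ with $|X|=\mu$ such that $(X,c^{-1}(\xi)\cap[X]^2)$ is highly connected; $\not\to_{hc}$ is its negation. *)

(* cardinals are represented by types; subsets by predicates. *)
From Stdlib Require Import List Relations Wellfounded.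

Set Implicit Arguments.

Definition card_le (A B : Type) : Prop :=
  exists f : A -> B, forall a a', f a = f a' -> a = a'.

Definition equinum (A B : Type) : Prop :=
  exists f : A -> B,
    (forall a a', f a = f a' -> a = a') /\ (forall b, exists a, f a = b).

Definition card_lt (A B : Type) : Prop := card_le A B /\ ~ card_le B A.

Definition infinite_type (A : Type) : Prop :=
  ~ (exists l : list A, forall x, In x l).

Definition strict_well_order (V : Type) (R : V -> V -> Prop) : Prop :=
  (forall x, ~ R x x) /\
  (forall x y z, R x y -> R y z -> R x z) /\
  (forall x y, R x y \/ x = y \/ R y x) /\
  well_founded R.

(* (V, R) is an initial ordinal, i.e. the von Neumann cardinal |V|:
   every proper initial segment has cardinality < |V|. *)
Definition initial_ordinal (V : Type) (R : V -> V -> Prop) : Prop :=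
  strict_well_order R /\ forall x, card_lt {y : V | R y x} V.

Definition cofinal (V : Type) (R : V -> V -> Prop) (C : V -> Prop) : Prop :=
  forall v, exists c, C c /\ (v = c \/ R v c).

Definition is_cofinality (V : Type) (R : V -> V -> Prop) (M : Type) : Prop :=
  (exists C : V -> Prop, cofinal R C /\ equinum {x : V | C x} M) /\
  (forall C : V -> Prop, cofinal R C -> card_le M {x : V | C x}).

Definition connected_on (V : Type) (S : V -> Prop) (E : V -> V -> Prop) : Prop :=
  forall x y, S x -> S y ->
    clos_refl_trans V (fun a b => S a /\ S b /\ E a b) x y.

Definition highly_connected (V : Type) (X : V -> Prop) (E : V -> V -> Prop) : Prop :=
  forall D : V -> Prop, (forall x, D x -> X x) ->
    card_lt {x : V | D x} {x : V | X x} ->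
    connected_on (fun x => X x /\ ~ D x) E.

(* nu ->_hc (mu)^2_lambda, where nu, mu, lambda are the cardinalities of V, M, L.
   A colouring of [V]^2 is represented by a symmetric c : V -> V -> L
   (its values on the diagonal are irrelevant). *)
Definition arrow_hc (V M L : Type) : Prop :=
  forall c : V -> V -> L, (forall x y, c x y = c y x) ->
    exists (xi : L) (X : V -> Prop),
      equinum {x : V | X x} M /\
      highly_connected X (fun a b => a <> b /\ c a b = xi).

(* Choose for every v < nu an element p v >= v of a cofinal set C of size
   mu = cf(nu), and let q : nu -> mu be p followed by a bijection C ~ mu.  Pull a
   colouring of [mu]^2 without a mu-sized highly connected monochromatic set back
   along q, and let X be a nu-sized one for the pulled-back colouring.  Every
   nu-sized subset of nu is unbounded, because initial segments of an initial
   ordinal are smaller than it; hence its p-image is cofinal and its q-image has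
   size mu.  So q[X] has size mu, and a D in q[X] of size < mu has a preimage of
   size < nu in X (otherwise the image of that preimage, contained in D, would
   have size mu).  X minus that preimage is connected, and q maps it onto
   q[X] \ D sending edges to edges or collapsing them, so q[X] is highly
   connected: a contradiction. *)

From Stdlib Require Import List Relations Wellfounded.
From mathcomp Require Import ssreflect ssrfun ssrbool eqtype.
From mathcomp Require Import boolp classical_sets functions.
From mathcomp Require cardinality.

Set Implicit Arguments.
Unset Strict Implicit.

Local Open Scope classical_set_scope.

Lemma sval_inj (T : Type) (P : T -> Prop) : injective (@sval T P).
Proof. by move=> x y; apply: eq_sig_hprop => z; exact: Prop_irrelevance. Qed.

Lemma card_le_trans (A B C : Type) : card_le A B -> card_le B C -> card_le A C.
Proof. by move=> [f f_inj] [g g_inj]; exists (g \o f) => a a' /g_inj /f_inj. Qed.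

Lemma card_le_sig (T : Type) (P : T -> Prop) : card_le {x | P x} T.
Proof. by exists sval; exact: sval_inj. Qed.

Lemma card_le_sub (T : Type) (P Q : T -> Prop) :
  (forall x, P x -> Q x) -> card_le {x | P x} {x | Q x}.
Proof.
move=> PQ; exists (fun x => exist Q (sval x) (PQ _ (svalP x))).
by move=> x y /(congr1 sval) /= /sval_inj.
Qed.

Lemma equinum_card_le_sym (A B : Type) : equinum A B -> card_le B A.
Proof.
move=> [f [_ f_surj]]; exists (fun b => sval (cid (f_surj b))).
by move=> b b' eq_ab; rewrite -(svalP (cid (f_surj b))) eq_ab (svalP (cid (f_surj b'))).
Qed.

Lemma card_le_setT (A B : Type) :
  card_le A B -> cardinality.card_le [set: A] [set: B].
Proof.
move=> [f f_inj].
have [g] : $|{injfun [set: A] >-> [set: B]}|.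
  by apply/cardinality.injfunPex; exists f => // a a' _ _; exact: f_inj.
exact: cardinality.inj_card_le.
Qed.

Lemma equinum_card_eq (A B : Type) :
  cardinality.card_eq [set: A] [set: B] -> equinum A B.
Proof.
move=> /cardinality.card_bijP[f [g fK gK]].
exists (fun a => val (f (SigSub (mem_set (I : [set: A] a))))); split.
  by move=> a a' /val_inj /(can_inj fK) [].
move=> b; set y := SigSub (mem_set (I : [set: B] b)).
exists (val (g y)).
suff -> : SigSub (mem_set (I : [set: A] (val (g y)))) = g y by rewrite gK.
exact: val_inj.
Qed.

Lemma card_le_antisym (A B : Type) : card_le A B -> card_le B A -> equinum A B.
Proof.
move=> AB BA; apply: equinum_card_eq.
by apply: cardinality.Cantor_Bernstein; exact: card_le_setT.
Qed.

Lemma card_le_image_comp_inj (X A B : Type) (g : A -> B) (h : X -> A) (S : set X) :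
  injective g -> card_le {a | (h @` S) a} {b | ((g \o h) @` S) b}.
Proof.
move=> g_inj.
pose gS (a : {a | (h @` S) a}) : {b | ((g \o h) @` S) b} :=
  exist _ (g (sval a)) (let: ex_intro2 x Sx hx := svalP a in
                        ex_intro2 _ _ x Sx (congr1 g hx)).
by exists gS => a a' /(congr1 sval) /g_inj /sval_inj.
Qed.

Lemma card_le_image_comp (X A B : Type) (g : A -> B) (h : X -> A) (S : set X) :
  card_le {b | ((g \o h) @` S) b} {a | (h @` S) a}.
Proof.
pose wit (b : {b | ((g \o h) @` S) b}) := cid2 (svalP b).
exists (fun b => exist _ (h (sval (wit b))) (ex_intro2 _ _ _ (s2valP (wit b)) erefl)).
move=> b b' /(congr1 sval) /= /(congr1 g) eq_gh; apply: sval_inj.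
by rewrite -(s2valP' (wit b)) -(s2valP' (wit b')).
Qed.

Lemma connected_on_image (A B : Type) (h : A -> B) (S : set A) (T : set B)
    (E : A -> A -> Prop) (E' : B -> B -> Prop) :
  connected_on S E ->
  (forall b, T b -> exists2 a, S a & h a = b) ->
  (forall a, S a -> T (h a)) ->
  (forall a b, S a -> S b -> E a b -> h a = h b \/ E' (h a) (h b)) ->
  connected_on T E'.
Proof.
move=> S_conn T_sub_hS hS_sub_T hE _ _ /T_sub_hS[a Sa <-] /T_sub_hS[b Sb <-].
elim: (S_conn a b Sa Sb) => {a b Sa Sb} [a b [Sa [Sb Eab]]|a|a b d _ IHab _ IHbd].
- case: (hE a b Sa Sb Eab) => [->|E'ab]; first exact: rt_refl.
  by apply: rt_step; split; [|split]; [exact: hS_sub_T..|].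
- exact: rt_refl.
- exact: rt_trans IHab IHbd.
Qed.

Lemma cofinal_selector (V : Type) (R : V -> V -> Prop) (C : set V) :
  cofinal R C ->
  exists p : V -> {x | C x}, forall v, v = sval (p v) \/ R v (sval (p v)).
Proof.
move=> C_cof; exists (fun v => let: exist c (conj Cc vc) := cid (C_cof v) in exist C c Cc).
by move=> v; case: (cid (C_cof v)) => c [].
Qed.

Section CofinalProjection.

Variables (V : Type) (R : V -> V -> Prop) (M : Type).
Hypothesis R_trans : forall x y z, R x y -> R y z -> R x z.
Hypothesis R_total : forall x y, R x y \/ x = y \/ R y x.
Hypothesis segment_small : forall v, card_lt {y | R y v} V.
Hypothesis M_cofinality : forall C, cofinal R C -> card_le M {x | C x}.

Variables (C : set V) (p : V -> {x | C x}) (f : {x | C x} -> M).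
Hypothesis p_above : forall v, v = sval (p v) \/ R v (sval (p v)).
Hypothesis f_inj : injective f.

Local Notation q := (f \o p).

Lemma bounded_not_large (S : set V) (v0 : V) :
  (forall x, S x -> R x v0) -> ~ card_le V {x | S x}.
Proof.
move=> S_below VS; apply: (proj2 (segment_small v0)).
exact: card_le_trans VS (card_le_sub S_below).
Qed.

Lemma cofinal_image_of_large (S : set V) :
  card_le V {x | S x} -> cofinal R ((sval \o p) @` S).
Proof.
move=> VS v0; apply: contrapT => no_above; apply: (bounded_not_large (v0 := v0) _ VS) => x Sx.
have px_below : R (sval (p x)) v0.
  case: (R_total (sval (p x)) v0) => [//|v0_le]; exfalso; apply: no_above.
  by exists (sval (p x)); split; [exists x|case: v0_le => [->|]; [left|right]].
by case: (p_above x) => [-> //|x_px]; exact: R_trans x_px px_below.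
Qed.

Lemma card_le_image_of_large (S : set V) :
  card_le V {x | S x} -> card_le M {m | (q @` S) m}.
Proof.
move=> VS; apply: card_le_trans (M_cofinality (cofinal_image_of_large VS)) _.
apply: card_le_trans (card_le_image_comp sval p S) _.
exact: card_le_image_comp_inj.
Qed.

Lemma image_equinum (X : set V) :
  equinum {x | X x} V -> equinum {m | (q @` X) m} M.
Proof.
move=> XV; apply: card_le_antisym; first exact: card_le_sig.
exact: card_le_image_of_large (equinum_card_le_sym XV).
Qed.

Lemma card_lt_preimage (X : set V) (D : set M) :
  card_le V {x | X x} -> card_lt {m | D m} {m | (q @` X) m} ->
  card_lt {x | X x /\ D (q x)} {x | X x}.
Proof.
move=> VX [_ not_qX_le_D]; split; first by apply: card_le_sub => x [].
move=> X_le_XD; apply: not_qX_le_D.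
apply: card_le_trans (card_le_sig _) _.
apply: card_le_trans (card_le_image_of_large (card_le_trans VX X_le_XD)) _.
by apply: card_le_sub => _ [x [_ Dqx] <-].
Qed.

Lemma image_highly_connected (E : M -> M -> Prop) (X : set V) :
  card_le V {x | X x} ->
  highly_connected X (fun a b => a <> b /\ E (q a) (q b)) ->
  highly_connected (q @` X) (fun m m' => m <> m' /\ E m m').
Proof.
move=> VX X_hc D _ D_small.
have := X_hc (fun x => X x /\ D (q x)) (fun x => @proj1 _ _) (card_lt_preimage VX D_small).
move=> /connected_on_image; apply.
- by move=> _ [[x Xx <-] nDqx]; exists x => //; split => // -[].
- by move=> x [Xx nDqx]; split; [exists x | move=> Dqx; apply: nDqx].
- by move=> a b _ _ [_ Eab]; case: (EM (q a = q b)) => [|ne]; [left | right; split].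
Qed.

End CofinalProjection.

Theorem mainTheorem5 (V : Type) (R : V -> V -> Prop) (M L : Type) :
  infinite_type V ->
  initial_ordinal R ->
  is_cofinality R M ->
  ~ arrow_hc M M L ->
  ~ arrow_hc V V L.
Proof.
move=> _ [[_ [R_trans [R_total _]]] segment_small] [[C [C_cof [f [f_inj _]]]] M_cof].
move=> not_arrow_M arrow_V; apply: not_arrow_M => c c_sym.
have [p p_above] := cofinal_selector C_cof.
have [xi [X [XV X_hc]]] := arrow_V (fun u v => c (f (p u)) (f (p v))) (fun u v => c_sym _ _).
exists xi, ((f \o p) @` X); split.
- exact: (image_equinum R_trans R_total segment_small M_cof p_above f_inj XV).
- exact: (image_highly_connected R_trans R_total segment_small M_cof p_above f_inj
            (equinum_card_le_sym XV) X_hc).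
Qed.
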